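(* Let $G$ be a finite group. The following are equivalent: (1) $G$ is nested; (2) there is a chain of normal subgroups $G=X_0>X_1>\dots>X_n\ge 1$ such that for every normal subgroup $N$ of $G$ we have $Z(G/N)=X_i/N$ for some $i\in\{0,\dots,n\}$; (3) for all normal subgroups $N,M$ of $G$, defining $Z_N$ and $Z_M$ by $Z_N/N=Z(G/N)$ and $Z_M/M=Z(G/M)$, either $Z_N\le Z_M$ or $Z_M\le Z_N$. Moreover, if in (2) for every $i\in\{0,\dots,n\}$ there exists a normal subgroup $N$ with $Z(G/N)=X_i/N$, then $G=X_0>X_1>\dots>X_n$ is exactly the chain of centers of $G$.
   Context: All groups are finite; $\mathrm{Irr}(G)$ is the set of complex irreducible characters of $G$. For $\chi\in\mathrm{Irr}(G)$, $Z(\chi)=\{g\in G: |\chi(g)|=\chi(1)\}$ is the center of $\chi$ (a normal subgroup with $Z(\chi)/\ker\chi=Z(G/\ker\chi)$). A group $G$ is nested if for all $\chi,\psi\in\mathrm{Irr}(G)$ either $Z(\chi)\le Z(\psi)$ or $Z(\psi)\le Z(\chi)$. If $G$ is nested, the distinct subgroups in $\{Z(\chi):\chi\in\mathrm{Irr}(G)\}$ form a chain $G=X_0>X_1>\dots>X_n\ge1$, called the chain of centers of $G$. *)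

From mathcomp Require Import all_boot all_order all_algebra all_fingroup all_solvable all_field all_character.
Set Implicit Arguments. Unset Strict Implicit. Unset Printing Implicit Defensive.
Import GRing.Theory Num.Theory.
Local Open Scope group_scope.

Definition ZN (gT : finGroupType) (G N : {group gT}) : {set gT} :=
  coset N @*^-1 'Z(G / N).

Definition nested (gT : finGroupType) (G : {group gT}) : Prop :=
  forall i j : Iirr G,
    ('Z(('chi_i)%R)%CF \subset 'Z(('chi_j)%R)%CF) \/ ('Z(('chi_j)%R)%CF \subset 'Z(('chi_i)%R)%CF).

Definition normal_chain (gT : finGroupType) (G : {group gT}) (n : nat)
    (X : nat -> {group gT}) : Prop :=
  [/\ X 0%N = G,
      (forall i, (i < n)%N -> X i.+1 \proper X i) &
      (forall i, (i <= n)%N -> X i <| G)].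

Definition centers_in_chain (gT : finGroupType) (G : {group gT}) (n : nat)
    (X : nat -> {group gT}) : Prop :=
  forall N : {group gT}, N <| G -> exists2 i, (i <= n)%N & ZN G N = X i.

From mathcomp Require Import all_boot all_order all_algebra all_fingroup all_solvable all_field all_character.
Set Implicit Arguments. Unset Strict Implicit. Unset Printing Implicit Defensive.
Local Open Scope ring_scope.
Local Open Scope group_scope.

(* The bridge between characters and normal subgroups is the identity
   Z(chi) = Z_{ker chi} for chi in Irr(G) (Isaacs 2.27(f)).  Since
   Z_N/N is characterised by [~: Z_N, G] <= N, the map N |-> Z_N is
   monotone, and N is the intersection of the kernels of the irreducible
   characters containing it; hence Z_N is the smallest Z(chi) with
   N <= ker chi whenever the centers of the irreducibles form a chain.
   So for a nested group every Z_N is some Z(chi), which gives (1) <=> (3).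
   For (1) => (2) we take the chain of centers itself, obtained by sorting
   the distinct Z(chi) by reverse inclusion; for (2) => (1) each Z(chi) is
   a term of the chain, and the terms of a chain are totally ordered.
   The final statement follows since every chain term is realised as a
   Z_N, hence as a Z(chi), and conversely every Z(chi) is a Z_{ker chi}. *)

Definition cfcenters (gT : finGroupType) (G : {group gT}) : seq {group gT} :=
  sort (fun A B : {group gT} => B \subset A)
    (undup [seq cfcenter_group 'chi[G]_i | i <- enum (Iirr G)]).

Section CenterPreimage.

Variables (gT : finGroupType) (G : {group gT}).

Lemma ZN_subG (N : {group gT}) : N <| G -> ZN G N \subset G.
Proof.
by move=> nsNG; rewrite /ZN -{2}(quotientGK nsNG) morphpreS ?center_sub.
Qed.

Lemma sub_ZN (N : {group gT}) (A : {set gT}) : N <| G -> A \subset G ->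
  (A \subset ZN G N) = ([~: A, G] \subset N).
Proof.
move=> nsNG sAG; have nNG := normal_norm nsNG.
rewrite /ZN -sub_quotient_pre ?(subset_trans sAG) //.
by rewrite subsetI quotientS //= quotient_cents2 ?(subset_trans sAG).
Qed.

Lemma ZN_mono (N K : {group gT}) : N <| G -> K <| G -> N \subset K ->
  ZN G N \subset ZN G K.
Proof.
move=> nsNG nsKG sNK; rewrite sub_ZN ?ZN_subG //.
by apply: subset_trans sNK; rewrite -sub_ZN ?ZN_subG.
Qed.

Lemma ZN_id : ZN G G = G.
Proof.
apply/eqP; rewrite eqEsubset ZN_subG ?normal_refl // sub_ZN ?normal_refl //.
by rewrite commg_subl normG.
Qed.

(* Isaacs (2.27)(f) restated: the center of an irreducible character is the
   preimage of the center of G modulo its kernel. *)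
Lemma cfcenter_ZN (i : Iirr G) : 'Z('chi_i)%CF = ZN G (cfker 'chi_i).
Proof.
by rewrite /ZN -cfcenter_eq_center quotientGK ?cfker_center_normal.
Qed.

Lemma cfcenter_irr0 : 'Z('chi[G]_0)%CF = G.
Proof.
have ker0G : cfker_group 'chi[G]_0 = G by apply: val_inj; apply: cfker_irr0.
by rewrite cfcenter_ZN ker0G ZN_id.
Qed.

(* In a nested group, Z_N is the smallest center Z(chi) among the
   irreducible chi whose kernel contains N. *)
Lemma nested_ZN_cfcenter (N : {group gT}) : nested G -> N <| G ->
  exists j : Iirr G, ZN G N = 'Z('chi_j)%CF.
Proof.
move=> nestedG nsNG.
pose N_ker j := N \subset cfker 'chi[G]_j.
have N_ker0 : N_ker 0 by rewrite /N_ker cfker_irr0 normal_sub.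
have [j N_kerj minj] := arg_minnP (fun j => #|'Z('chi_j)%CF|) N_ker0.
exists j; apply/eqP; rewrite eqEsubset cfcenter_ZN ZN_mono ?cfker_normal //=.
rewrite -cfcenter_ZN sub_ZN ?cfcenter_sub // -(cap_cfker_normal nsNG).
apply/bigcapsP=> i N_keri.
have sZjZi : 'Z('chi_j)%CF \subset 'Z('chi_i)%CF.
  have [sZiZj|//] := nestedG i j.
  suff -> : 'Z('chi_i)%CF = 'Z('chi_j)%CF by [].
  by apply/eqP; rewrite eqEcard sZiZj minj.
apply: subset_trans (commSg _ sZjZi) _.
by rewrite -sub_ZN ?cfcenter_sub ?cfker_normal // -cfcenter_ZN.
Qed.

Lemma nested_ZN_total : nested G ->
  forall N M : {group gT}, N <| G -> M <| G ->
    (ZN G N \subset ZN G M) \/ (ZN G M \subset ZN G N).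
Proof.
move=> nestedG N M nsNG nsMG.
have [i ->] := nested_ZN_cfcenter nestedG nsNG.
by have [j ->] := nested_ZN_cfcenter nestedG nsMG.
Qed.

Lemma ZN_total_nested :
  (forall N M : {group gT}, N <| G -> M <| G ->
    (ZN G N \subset ZN G M) \/ (ZN G M \subset ZN G N)) -> nested G.
Proof.
by move=> totalZ i j; rewrite !cfcenter_ZN; apply: totalZ; apply: cfker_normal.
Qed.

Lemma normal_chain_mono n (X : nat -> {group gT}) : normal_chain G n X ->
  forall a b, (a <= b)%N -> (b <= n)%N -> X b \subset X a.
Proof.
case=> _ properX _ a; elim=> [|b IHb]; first by rewrite leqn0 => /eqP ->.
rewrite leq_eqVlt => /orP[/eqP -> _ //|]; rewrite ltnS => le_ab lt_bn.
exact: subset_trans (proper_sub (properX b lt_bn)) (IHb le_ab (ltnW lt_bn)).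
Qed.

Lemma chain_nested n (X : nat -> {group gT}) : normal_chain G n X ->
  centers_in_chain G n X -> nested G.
Proof.
move=> chainX centersX i j; rewrite !cfcenter_ZN.
have [a le_an ->] := centersX _ (cfker_normal 'chi_i).
have [b le_bn ->] := centersX _ (cfker_normal 'chi_j).
have [le_ab | /ltnW le_ba] := leqP a b; [right | left].
  exact: normal_chain_mono chainX _ _ le_ab le_bn.
exact: normal_chain_mono chainX _ _ le_ba le_an.
Qed.

Lemma seq_normal_chain (s : seq {group gT}) :
  uniq s -> sorted (fun A B : {group gT} => B \subset A) s ->
  nth 1%G s 0 = G -> (forall A, A \in s -> A <| G) ->
  normal_chain G (size s).-1 (nth 1%G s).
Proof.
move=> uniq_s /sortedP sorted_s headG normal_s.
split=> // [i lt_in | i _]; last first.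
  have [lt_is | le_si] := ltnP i (size s); first by rewrite normal_s ?mem_nth.
  by rewrite nth_default ?normal1.
have lt_i1s : (i.+1 < size s)%N by rewrite -ltn_predRL.
rewrite properEneq sorted_s // andbT.
by rewrite (inj_eq val_inj) nth_uniq ?(ltnW lt_i1s) // neq_ltn ltnSn orbT.
Qed.

Lemma mem_cfcenters (A : {group gT}) :
  reflect (exists j : Iirr G, A = cfcenter_group 'chi_j) (A \in cfcenters G).
Proof.
rewrite /cfcenters mem_sort mem_undup; apply: (iffP mapP) => [[j _ ->] | [j ->]].
  by exists j.
by exists j; rewrite ?mem_enum.
Qed.

(* Nestedness makes reverse inclusion total on the centers, so sorting works. *)
Lemma cfcenters_sorted : nested G ->
  sorted (fun A B : {group gT} => B \subset A) (cfcenters G).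
Proof.
move=> nestedG; apply: (sort_sorted_in (P := [pred A | A \in cfcenters G])).
  move=> A B /mem_cfcenters[i ->] /mem_cfcenters[j ->] /=.
  by have [-> | ->] := nestedG i j; rewrite ?orbT.
by apply/allP=> A; rewrite inE /cfcenters mem_sort.
Qed.

Lemma sorted_head_sup (s : seq {group gT}) (H : {group gT}) :
  sorted (fun A B : {group gT} => B \subset A) s -> H \in s ->
  H \subset nth 1%G s 0.
Proof.
have trans_sup : transitive (fun A B : {group gT} => B \subset A).
  by move=> B A C sBA sCB; apply: subset_trans sCB sBA.
case: s => // A s /= path_s /predU1P[-> // | H_s].
by have /allP -> := order_path_min trans_sup path_s.
Qed.

(* The chain of centers starts with G = Z(1_G). *)
Lemma cfcenters_head : nested G -> nth 1%G (cfcenters G) 0 = G.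
Proof.
move=> nestedG; have G_in : G \in cfcenters G.
  by apply/mem_cfcenters; exists 0; apply: val_inj; rewrite /= cfcenter_irr0.
have /mem_cfcenters[j Zj] : nth 1%G (cfcenters G) 0 \in cfcenters G.
  by rewrite mem_nth //; case: (cfcenters G) G_in.
apply: val_inj; apply/eqP; rewrite eqEsubset sorted_head_sup ?cfcenters_sorted //.
by rewrite Zj cfcenter_sub.
Qed.

Lemma nested_chain : nested G ->
  exists n (X : nat -> {group gT}), normal_chain G n X /\ centers_in_chain G n X.
Proof.
move=> nestedG; set s := cfcenters G.
have Z0_in : cfcenter_group 'chi[G]_0 \in s by apply/mem_cfcenters; exists 0.
have size_s : (0 < size s)%N by case: s Z0_in.
exists (size s).-1, (nth 1%G s); split.
  apply: seq_normal_chain; rewrite ?cfcenters_sorted ?cfcenters_head //.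
    by rewrite sort_uniq undup_uniq.
  by move=> A /mem_cfcenters[j ->]; apply: cfcenter_normal.
move=> N nsNG; have [j ->] := nested_ZN_cfcenter nestedG nsNG.
have Zj_in : cfcenter_group 'chi_j \in s by apply/mem_cfcenters; exists j.
exists (index (cfcenter_group 'chi_j) s);
  by rewrite ?nth_index // -ltnS prednK ?index_mem.
Qed.

Lemma realised_chain_cfcenters n (X : nat -> {group gT}) :
  normal_chain G n X -> centers_in_chain G n X ->
  (forall i, (i <= n)%N -> exists2 N : {group gT}, N <| G & ZN G N = X i) ->
  forall H : {set gT},
    (exists2 i, (i <= n)%N & H = X i) <-> (exists j : Iirr G, H = 'Z('chi_j)%CF).
Proof.
move=> chainX centersX realisedX H; split=> [[i le_in ->] | [j ->]].
  have [N nsNG <-] := realisedX i le_in.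
  exact: nested_ZN_cfcenter (chain_nested chainX centersX) nsNG.
by rewrite cfcenter_ZN; apply: centersX; apply: cfker_normal.
Qed.

End CenterPreimage.

Unset Implicit Arguments. Set Strict Implicit.

Theorem theorem1p3 (gT : finGroupType) (G : {group gT}) :
  (* (1) <-> (2) *)
  (nested G <->
     exists n (X : nat -> {group gT}), normal_chain G n X /\ centers_in_chain G n X)
  /\
  (* (1) <-> (3) *)
  (nested G <->
     forall N M : {group gT}, N <| G -> M <| G ->
       (ZN G N \subset ZN G M) \/ (ZN G M \subset ZN G N))
  /\
  (* Moreover: a chain as in (2) all of whose terms are realised is the chain of centers *)
  (forall n (X : nat -> {group gT}),
     normal_chain G n X -> centers_in_chain G n X ->
     (forall i, (i <= n)%N -> exists2 N : {group gT}, N <| G & ZN G N = X i) ->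
     forall H : {set gT},
       (exists2 i, (i <= n)%N & H = X i) <-> (exists j : Iirr G, H = 'Z(('chi_j)%R)%CF)).
Proof.
split; last split.
- split; first exact: nested_chain.
  by case=> n [X [chainX centersX]]; apply: chain_nested chainX centersX.
- by split; [apply: nested_ZN_total | apply: ZN_total_nested].
- exact: realised_chain_cfcenters.
Qed.
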